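(* Let $q=p^n$ with $p$ prime and $n\in\mathbb{Z}^+$, let $\chi$ be a generator of the cyclic group $\widehat{\mathbb{F}_q^{\times}}$ of multiplicative characters of $\mathbb{F}_q$, let $k$ be a positive integer with $k\mid q-1$, and let $m=(q-1)/k$. Define the $m\times m$ matrices $$A_q(k)=\left[G_q(\chi^{ki+kj})\right]_{0\le i,j\le m-1},\qquad B_q(k)=\left[G_q(\chi^{ki+kj})^{-1}\right]_{0\le i,j\le m-1}.$$ Then: (i) $\det A_q(k)\in\mathbb{Z}$ and $\det B_q(k)\in\mathbb{Q}$, and both determinants are independent of the choice of the generator $\chi$. (ii) $\det A_q(k)\equiv (-1)^{\frac{m^2-m+2}{2}}\pmod p$.
   Context: For any multiplicative character $\psi$ of $\mathbb{F}_q$ we set $\psi(0)=0$ (in particular the trivial character $\varepsilon$ satisfies $\varepsilon(0)=0$). Let $\zeta_p=e^{2\pi i/p}$ and $\mathrm{Tr}=\mathrm{Tr}_{\mathbb{F}_q/\mathbb{F}_p}$, $\mathrm{Tr}(x)=\sum_{j=0}^{n-1}x^{p^j}$. The Gauss sum is $G_q(\psi)=\sum_{x\in\mathbb{F}_q}\psi(x)\zeta_p^{\mathrm{Tr}(x)}$. Powers $\chi^r$ are taken for arbitrary integers $r$ in the group of characters. *)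

From HB Require Import structures.
From mathcomp Require Import all_boot all_order all_algebra all_field.
Set Implicit Arguments.
Unset Strict Implicit.
Unset Printing Implicit Defensive.
Import Order.TTheory GRing.Theory Num.Theory.
Local Open Scope ring_scope.

Section Gauss.
Variable F : finFieldType.

Definition is_mchar (psi : F -> algC) : Prop :=
  [/\ psi 0 = 0, psi 1 = 1 & forall x y, psi (x * y) = psi x * psi y].

Definition mchar_pow (chi : F -> algC) (r : int) : F -> algC :=
  fun x => if x == 0 then 0 else (chi x) ^ r.

Definition mchar_generator (chi : F -> algC) : Prop :=
  is_mchar chi /\
  forall psi, is_mchar psi -> exists r : int, forall x, psi x = mchar_pow chi r x.

(* zeta_p = e^{2 pi i / p}: p.-root (-1) is e^{i pi / p} (minimal argument) *)
Definition zeta (p : nat) : algC := (p.-root (-1)) ^+ 2.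

Definition trace (p n : nat) (x : F) : F := \sum_(j < n) x ^+ (p ^ j).

Definition fp_rep (p : nat) (y : F) : nat :=
  if [pick k : 'I_p | (k%:R : F) == y] is Some k then val k else 0%N.

Definition addchar (p n : nat) (x : F) : algC := zeta p ^+ fp_rep p (trace p n x).

Definition gauss (p n : nat) (psi : F -> algC) : algC :=
  \sum_(x : F) psi x * addchar p n x.

Definition Amat (p n : nat) (chi : F -> algC) (k : nat) :
  'M[algC]_((p ^ n).-1 %/ k) :=
  \matrix_(i, j) gauss p n (mchar_pow chi ((k * i + k * j)%N)%:Z).

Definition Bmat (p n : nat) (chi : F -> algC) (k : nat) :
  'M[algC]_((p ^ n).-1 %/ k) :=
  \matrix_(i, j) (gauss p n (mchar_pow chi ((k * i + k * j)%N)%:Z))^-1.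

End Gauss.

From HB Require Import structures.
From mathcomp Require Import all_boot all_order all_algebra all_field.
From mathcomp Require Import all_fingroup all_solvable integral_char zify.
Set Implicit Arguments.
Unset Strict Implicit.
Unset Printing Implicit Defensive.
Import Order.TTheory GRing.Theory Num.Theory.
Local Open Scope ring_scope.

(* Write q - 1 = k m and f a = G(chi^(k a)), an m-periodic function, so that A
   and B are the Hankel matrices (f (i + j)) and (f (i + j)^-1).  An automorphism
   nu of the algebraic numbers maps chi to chi^t, with t prime to q - 1, and
   zeta_p to zeta_p^c; substituting x -> x / c in the Gauss sum gives
   nu (f a) = b^a f (t a) with b^m = 1.  On a Hankel matrix the factor b^(i+j) is
   a diagonal conjugation of determinant b^(m(m-1)) = 1, and a -> t a permutes
   Z/m, so both determinants are fixed by every nu; as they lie in a cyclotomic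
   field they are rational, and det A, an algebraic integer, is an integer.
   Another generator of the character group is chi^t with t prime to q - 1,
   which again only permutes Z/m.  Modulo 1 - zeta_p the Gauss sum reduces to the
   character sum of chi^(k a), which is -1 if m | a and 0 otherwise; that 0/-1
   Hankel matrix has determinant (-1)^(C(m,2)+1), and an integer divisible by
   1 - zeta_p is divisible by p. *)

Lemma prod_1_subX_prim_root (N : nat) (z : algC) : N.-primitive_root z ->
  \prod_(1 <= i < N) (1 - z ^+ i) = N%:R.
Proof.
move=> zN; have N_gt0 := prim_order_gt0 zN.
have X1_neq0 : ('X - 1 : {poly algC}) != 0 by rewrite polyXsubC_eq0.
have := factor_Xn_sub_1 zN; rewrite subrX1 big_ltn // expr0.
move/(mulfI X1_neq0)/(congr1 (horner^~ 1)).
rewrite horner_prod horner_sum.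
under eq_bigr do rewrite hornerXsubC.
under [in X in _ = X -> _]eq_bigr do rewrite hornerXn expr1n.
by rewrite sumr_const card_ord => ->.
Qed.

Section Zeta.
Variable p : nat.
Hypothesis p_pr : prime p.

Lemma zeta_prim_root : p.-primitive_root (zeta p).
Proof.
have p_gt0 := prime_gt0 p_pr; pose r : algC := p.-root (-1).
have rp : r ^+ p = -1 by rewrite rootCK.
have zp : zeta p ^+ p = 1 by rewrite /zeta -exprM mulnC exprM rp sqrrN expr1n.
have z_neq1 : zeta p != 1.
  rewrite /zeta -/r -subr_eq0 subr_sqr_1 mulf_eq0 !subr_eq0 addr_eq0.
  apply/norP; split; apply/eqP.
    move=> r1; move: rp; rewrite r1 expr1n => /eqP.
    by rewrite -subr_eq0 opprK -mulr2n pnatr_eq0.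
  by move=> rN1; have := rootC_lt0 (-1 : algC) (prime_gt1 p_pr); rewrite -/r rN1 ltrN10.
have [d zd d_dvd_p] := prim_order_exists p_gt0 zp.
case/primeP: p_pr => _ /(_ d d_dvd_p)/orP[]/eqP d_eq; last by move: zd; rewrite d_eq.
by move: (prim_expr_order zd); rewrite d_eq expr1 => /eqP; rewrite (negPf z_neq1).
Qed.

Lemma zeta_expp : zeta p ^+ p = 1.
Proof. exact: prim_expr_order zeta_prim_root. Qed.

Lemma zeta_Aint : zeta p \in Aint.
Proof. exact: Aint_prim_root zeta_prim_root. Qed.

Lemma subr_1_zeta_neq0 : 1 - zeta p != 0.
Proof.
rewrite subr_eq0 eq_sym; apply/eqP => z1.
have := prim_order_dvd zeta_prim_root 1; rewrite -z1 expr1 eqxx dvdn1.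
by move/eqP=> p1; move: (prime_gt1 p_pr); rewrite p1.
Qed.

Lemma eqAmod_p_1_sub_zeta : (p%:R == 0 %[mod 1 - zeta p])%A.
Proof.
rewrite /eqAmod unfold_in (negPf subr_1_zeta_neq0) subr0.
rewrite -(prod_1_subX_prim_root zeta_prim_root) big_ltn ?prime_gt1 //.
rewrite expr1 mulrAC divff ?subr_1_zeta_neq0 // mul1r.
by apply: rpred_prod => i _; rewrite rpredB ?rpred1 // rpredX // zeta_Aint.
Qed.

(* N is rational, so its conjugates give (1 - zeta^j) | N for 0 < j < p, and the
   product of these divisors is p; hence p divides N^(p-1). *)
Lemma eqAmod0_1_sub_zeta_dvdp (N : algC) : N \in Num.int ->
  (N == 0 %[mod 1 - zeta p])%A -> exists2 c, c \in Num.int & N = p%:R * c.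
Proof.
move=> ZN; rewrite /eqAmod unfold_in (negPf subr_1_zeta_neq0) subr0 => AN1.
have QN : N \in Crat by apply: rpred_int_num.
have ANj j : (1 <= j < p)%N -> N / (1 - zeta p ^+ j) \in Aint.
  case/andP=> j_gt0 j_lt_p.
  have j_cop : coprime j p by rewrite coprime_sym prime_coprime // gtnNdvd.
  have [nu nuE] := Qn_aut_exists j_cop.
  rewrite -(Aint_aut nu) fmorph_div rmorphB rmorph1 in AN1.
  by rewrite (aut_Crat nu QN) (nuE (zeta p)) ?zeta_expp in AN1.
have : \prod_(1 <= j < p) (N / (1 - zeta p ^+ j)) \in Aint.
  by rewrite big_nat_cond; apply: rpred_prod => j /andP[/ANj].
rewrite prodf_div prod_1_subX_prim_root ?zeta_prim_root // prodr_const_nat => ANp.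
have p_neq0 : (p%:R : algC) != 0 by rewrite pnatr_eq0 -lt0n prime_gt0.
have : (p %| N ^+ (p - 1))%C.
  rewrite unfold_in (negPf p_neq0) Cint_rat_Aint //.
  by rewrite rpred_div ?rpredX ?rpred_nat.
rewrite dvdC_int ?rpredX // floorX // abszX Euclid_dvdX ?subn_gt0 ?prime_gt1 //.
rewrite -dvdC_int // unfold_in (negPf p_neq0) andbT => ZNp.
by exists (N / p%:R); last by rewrite mulrC divfK.
Qed.

End Zeta.

Section FiniteField.
Variable F : finFieldType.

Lemma card_unit_gt0 : (0 < #|F|.-1)%N.
Proof. by have := finNzRing_gt1 F; case: #|F| => [|[]]. Qed.

Lemma expf_card_unit (x : F) : x != 0 -> x ^+ #|F|.-1 = 1.
Proof.
move=> x_neq0; apply: (mulIf x_neq0); rewrite mul1r -exprSr.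
by rewrite prednK ?expf_card // (ltn_trans _ (finNzRing_gt1 F)).
Qed.

Lemma finField_prim_root : exists g : F, #|F|.-1.-primitive_root g.
Proof.
have : has #|F|.-1.-primitive_root (enum (predC1 (0 : F))).
  apply: has_prim_root; rewrite ?enum_uniq ?card_unit_gt0 //.
    by apply/allP=> x; rewrite mem_enum unity_rootE => /expf_card_unit ->.
  by rewrite -cardE cardC1.
by case/hasP=> g _ gF; exists g.
Qed.

Variable p : nat.
Hypothesis pcharF : p \in [pchar F].
Let p_pr : prime p := pcharf_prime pcharF.

Lemma natr_inj_lt_pchar (i j : nat) :
  (i < p)%N -> (j < p)%N -> (i%:R : F) = j%:R -> i = j.
Proof.
wlog le_ij : i j / (i <= j)%N => [IH i_lt j_lt eq_ij|i_lt j_lt eq_ij].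
  by case/orP: (leq_total i j) => [/IH|/IH/(_ j_lt i_lt (esym eq_ij))]; [exact|].
have : (p %| j - i)%N by rewrite (dvdn_pcharf pcharF) natrB // eq_ij subrr.
have [ji_eq0 _|ji_gt0] := posnP (j - i); first lia.
by move/(dvdn_leq ji_gt0); rewrite leqNgt (leq_ltn_trans (leq_subr i j) j_lt).
Qed.

Lemma fp_rep_natr (j : nat) : (j < p)%N -> fp_rep p (j%:R : F) = j.
Proof.
move=> j_lt; rewrite /fp_rep; case: pickP => [i /eqP|].
  by apply: natr_inj_lt_pchar.
by move/(_ (Ordinal j_lt)); rewrite eqxx.
Qed.

(* 'X^p - 'X already has the p distinct roots j%:R, so it has no others. *)
Lemma frobenius_fixed_natr (y : F) : y ^+ p = y -> exists2 j, (j < p)%N & j%:R = y.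
Proof.
move=> yp; pose rs := [seq (j%:R : F) | j <- iota 0 p].
pose P : {poly F} := 'X^p - 'X.
have sizeP : size P = (size rs).+1.
  rewrite size_map size_iota size_polyDl ?size_polyXn //.
  by rewrite size_polyN size_polyX ltnS prime_gt1.
have rootP : all (root P) rs.
  apply/allP=> _ /mapP[j _ ->]; rewrite /root !hornerE subr_eq0.
  by rewrite -(pFrobenius_autE pcharF) pFrobenius_aut_nat.
have uniq_rs : uniq_roots rs.
  rewrite uniq_rootsE map_inj_in_uniq ?iota_uniq // => i j.
  by rewrite !mem_iota => /andP[_ ?] /andP[_ ?]; apply: natr_inj_lt_pchar.
have : root P y by rewrite /root !hornerE yp subrr.
rewrite (all_roots_prod_XsubC sizeP rootP uniq_rs) rootZ ?lead_coef_eq0; last first.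
  by rewrite -size_poly_eq0 sizeP.
by rewrite root_prod_XsubC => /mapP[j]; rewrite mem_iota => /andP[_ ?] ->; exists j.
Qed.

Variable n : nat.

Lemma trace_natrM (c : nat) (x : F) : trace p n (c%:R * x) = c%:R * trace p n x.
Proof.
have frobX j : (c%:R : F) ^+ (p ^ j) = c%:R.
  elim: j => [|j IH]; first by rewrite expr1.
  by rewrite expnSr exprM IH -(pFrobenius_autE pcharF) pFrobenius_aut_nat.
by rewrite /trace mulr_sumr; apply: eq_bigr => j _; rewrite exprMn frobX.
Qed.

Hypotheses (n_gt0 : (0 < n)%N) (cardF : #|F| = (p ^ n)%N).

Lemma trace_frobenius (x : F) : trace p n x ^+ p = trace p n x.
Proof.
rewrite -(pFrobenius_autE pcharF) /trace rmorph_sum /=.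
have := expf_card x; rewrite cardF -(prednK n_gt0) => xq.
rewrite [LHS]big_ord_recr [RHS]big_ord_recl /= expn0 expr1 addrC.
rewrite pFrobenius_autE -exprM -expnSr xq; congr (_ + _).
by apply: eq_bigr => j _; rewrite pFrobenius_autE -exprM -expnSr.
Qed.

Lemma addchar_natrM (c : nat) (x : F) :
  addchar p n (c%:R * x) = addchar p n x ^+ c.
Proof.
have [j j_lt trE] := frobenius_fixed_natr (trace_frobenius x).
rewrite /addchar trace_natrM -trE -natrM -(GRing.natr_mod_pchar pcharF) -exprM.
by rewrite !fp_rep_natr ?ltn_pmod ?prime_gt0 // mulnC expr_mod ?zeta_expp.
Qed.

End FiniteField.

Lemma prim_root_neq0 (R : idomainType) (N : nat) (z : R) :
  N.-primitive_root z -> z != 0.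
Proof.
move=> zN; apply/eqP => z0; have /eqP := prim_expr_order zN.
by rewrite z0 expr0n gtn_eqF ?(prim_order_gt0 zN) // eq_sym oner_eq0.
Qed.

Lemma mchar_powE (F : finFieldType) (chi : F -> algC) (a : nat) x :
  mchar_pow chi a%:Z x = if x == 0 then 0 else chi x ^+ a.
Proof. by []. Qed.

Section MultiplicativeCharacter.
Variables (F : finFieldType) (chi : F -> algC).
Hypothesis chi_mchar : is_mchar chi.
Local Notation q1 := #|F|.-1.

Lemma mchar0 : chi 0 = 0. Proof. by case: chi_mchar. Qed.
Lemma mchar1 : chi 1 = 1. Proof. by case: chi_mchar. Qed.
Lemma mcharM x y : chi (x * y) = chi x * chi y. Proof. by case: chi_mchar. Qed.

Lemma mcharX x i : chi (x ^+ i) = chi x ^+ i.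
Proof. by elim: i => [|i IH]; rewrite ?mchar1 // !exprS mcharM IH. Qed.

Lemma mchar_unity x : x != 0 -> chi x ^+ q1 = 1.
Proof. by move=> x_neq0; rewrite -mcharX expf_card_unit ?mchar1. Qed.

Lemma mchar_Aint x : chi x \in Aint.
Proof.
have [->|x_neq0] := eqVneq x 0; first by rewrite mchar0 rpred0.
apply: (Aint_unity_root (card_unit_gt0 F)).
by rewrite unity_rootE mchar_unity.
Qed.

Lemma mchar_pow_Aint (a : nat) x : mchar_pow chi a%:Z x \in Aint.
Proof. by rewrite mchar_powE; case: ifP; rewrite ?rpred0 ?rpredX ?mchar_Aint. Qed.

Lemma mchar_pow_mod (a : nat) x :
  mchar_pow chi (a %% q1)%N%:Z x = mchar_pow chi a%:Z x.
Proof. by rewrite !mchar_powE; case: eqP => // /eqP/mchar_unity/expr_mod. Qed.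

Lemma mchar_powM (a : nat) u x : u != 0 ->
  mchar_pow chi a%:Z (u * x) = chi u ^+ a * mchar_pow chi a%:Z x.
Proof.
move=> u_neq0; rewrite !mchar_powE mulf_eq0 (negPf u_neq0) /=.
by case: eqP; rewrite ?mulr0 // mcharM exprMn.
Qed.

Lemma sum_mchar_pow (g : F) (a : nat) : q1.-primitive_root (chi g) ->
  \sum_x mchar_pow chi a%:Z x = if (q1 %| a)%N then q1%:R else 0.
Proof.
move=> chig_prim; have g_neq0 : g != 0.
  apply: contraTneq chig_prim => ->; rewrite mchar0.
  by apply/negP => /prim_root_neq0/eqP.
case: ifPn => [/dvdnP[c a_eq] | q1_ndvd].
  rewrite (bigD1 0) //= mchar_powE eqxx add0r (eq_bigr (fun=> 1)).
    by rewrite sumr_const cardC1.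
  move=> x x_neq0; rewrite mchar_powE (negPf x_neq0) a_eq.
  by rewrite mulnC exprM mchar_unity ?expr1n.
set S := \sum_x _; have : S = chi g ^+ a * S.
  rewrite {1}/S (reindex_inj (mulfI g_neq0)) mulr_sumr.
  by apply: eq_bigr => x _; rewrite mchar_powM.
move/eqP; rewrite -subr_eq0 -{1}(mul1r S) -mulrBl mulf_eq0 subr_eq0 eq_sym.
by rewrite -(prim_order_dvd chig_prim) (negPf q1_ndvd) => /eqP.
Qed.

End MultiplicativeCharacter.

Section CharacterGroup.
Variable F : finFieldType.
Local Notation q1 := #|F|.-1.

(* psi is w raised to the discrete logarithm to base g. *)
Lemma mchar_exists (g : F) (w : algC) : q1.-primitive_root g -> w ^+ q1 = 1 ->
  exists2 psi, is_mchar psi & psi g = w.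
Proof.
move=> g_prim wq1; have g_neq0 := prim_root_neq0 g_prim.
pose dlog x := if [pick i : 'I_q1 | g ^+ i == x] is Some i then val i else 0%N.
have dlogK x : x != 0 -> g ^+ dlog x = x.
  move=> x_neq0; rewrite /dlog; case: pickP => [i /eqP //|no_i].
  have [i xE] := prim_rootP g_prim (expf_card_unit x_neq0).
  by have := no_i i; rewrite xE eqxx.
have w_dlog i : w ^+ dlog (g ^+ i) = w ^+ i.
  have /eqP := dlogK _ (expf_neq0 i g_neq0).
  by rewrite (eq_prim_root_expr g_prim) -(expr_mod _ wq1) => /eqP->; rewrite expr_mod.
pose psi x := if x == 0 then 0 else w ^+ dlog x.
have psiX i : psi (g ^+ i) = w ^+ i by rewrite /psi expf_eq0 (negPf g_neq0) andbF.
exists psi; last by rewrite -[g]expr1 psiX.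
split; first by rewrite /psi eqxx.
  by rewrite -(expr0 g) psiX.
move=> x y; have [->|x_neq0] := eqVneq x 0; first by rewrite mul0r /psi eqxx mul0r.
have [->|y_neq0] := eqVneq y 0; first by rewrite mulr0 /psi eqxx mulr0.
have [i ->] := prim_rootP g_prim (expf_card_unit x_neq0).
have [j ->] := prim_rootP g_prim (expf_card_unit y_neq0).
by rewrite -exprD !psiX exprD.
Qed.

Lemma mchar_generator_prim_root (chi : F -> algC) (g : F) :
  mchar_generator chi -> q1.-primitive_root g -> q1.-primitive_root (chi g).
Proof.
move=> [chi_mchar chi_gen] g_prim.
have [w w_prim] := C_prim_root_exists (card_unit_gt0 F).
have [psi psi_mchar psigE] := mchar_exists g_prim (prim_expr_order w_prim).
have [r psiE] := chi_gen psi psi_mchar.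
have chig_unity := mchar_unity chi_mchar (prim_root_neq0 g_prim).
have [d chig_prim d_dvd] := prim_order_exists (card_unit_gt0 F) chig_unity.
suff d_eq : d = q1 by rewrite -d_eq.
apply/eqP; rewrite eqn_dvd d_dvd (prim_order_dvd w_prim) -psigE psiE /mchar_pow.
rewrite (negPf (prim_root_neq0 g_prim)) -[_ ^+ d]/(_ ^ d%:Z) exprzAC.
rewrite [_ ^ d%:Z](prim_expr_order chig_prim).
by rewrite exp1rz eqxx.
Qed.

Lemma mchar_eq_expr (chi psi : F -> algC) (g : F) :
  is_mchar chi -> is_mchar psi -> q1.-primitive_root g ->
  q1.-primitive_root (chi g) -> q1.-primitive_root (psi g) ->
  exists2 t, coprime t q1 & forall x, x != 0 -> psi x = chi x ^+ t.
Proof.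
move=> chi_mchar psi_mchar g_prim chig_prim psig_prim.
have [t psigE] := prim_rootP chig_prim (prim_expr_order psig_prim).
exists t; first by rewrite -(prim_root_exp_coprime _ chig_prim) -psigE.
move=> x x_neq0; have [i ->] := prim_rootP g_prim (expf_card_unit x_neq0).
by rewrite (mcharX psi_mchar) psigE (mcharX chi_mchar) -!exprM mulnC.
Qed.

End CharacterGroup.

Lemma det_ind (R : comNzRingType) (P : R -> Prop) (m : nat) (M : 'M[R]_m) :
  P 0 -> P 1 -> P (-1) -> (forall x y, P x -> P y -> P (x + y)) ->
  (forall x y, P x -> P y -> P (x * y)) -> (forall i j, P (M i j)) -> P (\det M).
Proof.
move=> P0 P1 PN1 PD PM PMij; apply: big_ind => // s _.
apply: (PM); last by apply: big_ind => // i _.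
by case: (odd_perm s); rewrite ?expr0 ?expr1.
Qed.

Lemma rpred_det (R : comNzRingType) (S : subringClosed R) (m : nat) (M : 'M[R]_m) :
  (forall i j, M i j \in S) -> \det M \in S.
Proof.
by apply: (det_ind (P := fun x => x \in S));
  [exact: rpred0 | exact: rpred1 | exact: rpredN1 | exact: rpredD | exact: rpredM].
Qed.

Lemma det_eqAmod (m : nat) (M M' : 'M[algC]_m) (e : algC) :
  (forall i j, M i j \in Aint) -> (forall i j, M' i j \in Aint) ->
  (forall i j, (M i j == M' i j %[mod e])%A) -> (\det M == \det M' %[mod e])%A.
Proof.
move=> AM AM' eqM.
pose K a b := [/\ a \in Aint, b \in Aint & (a == b %[mod e])%A].
have KD a1 b1 a2 b2 : K a1 b1 -> K a2 b2 -> K (a1 + a2) (b1 + b2).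
  by case=> ? ? ? [? ? ?]; split; rewrite ?rpredD ?eqAmodD.
have KM a1 b1 a2 b2 : K a1 b1 -> K a2 b2 -> K (a1 * a2) (b1 * b2).
  by case=> ? ? ? [? ? ?]; split; rewrite ?rpredM ?eqAmodM.
have Krefl a : a \in Aint -> K a a by split.
suff [] : K (\det M) (\det M') by [].
apply: (big_ind2 K) => [||s _]; [exact/Krefl/rpred0 | exact: KD |].
apply: (KM); first by apply/Krefl; rewrite rpredX ?rpredN1.
by apply: (big_ind2 K) => [||i _]; [exact/Krefl/rpred1 | exact: KM | split].
Qed.

Lemma expr_eqAmod1 (z : algC) (e : nat) : z \in Aint -> (z ^+ e == 1 %[mod 1 - z])%A.
Proof.
move=> Az; rewrite /eqAmod unfold_in; case: ifPn => [|z_neq1].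
  by rewrite subr_eq0 => /eqP <-; rewrite expr1n subrr.
rewrite subrX1 -opprB mulNr mulrC mulrN mulKf //.
by rewrite rpredN rpred_sum // => i _; rewrite rpredX.
Qed.

(* x lies in every subfield of algC containing the N-th roots of unity,
   i.e. in the cyclotomic field Q(zeta_N). *)
Definition in_cyclotomic (N : nat) (x : algC) : Prop :=
  forall P : algC -> Prop,
    (forall a b, P a -> P b -> P (a + b)) -> (forall a b, P a -> P b -> P (a * b)) ->
    (forall a, P a -> P (- a)) -> (forall a, P a -> P a^-1) ->
    (forall z, z ^+ N = 1 -> P z) -> P x.

Section Cyclotomic.
Variable N : nat.
Local Notation inQN := (in_cyclotomic N).

Lemma in_cyclotomicD a b : inQN a -> inQN b -> inQN (a + b).
Proof. by move=> Qa Qb P PD PM PN PV Pz; apply: (PD); [apply: Qa | apply: Qb]. Qed.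

Lemma in_cyclotomicM a b : inQN a -> inQN b -> inQN (a * b).
Proof. by move=> Qa Qb P PD PM PN PV Pz; apply: (PM); [apply: Qa | apply: Qb]. Qed.

Lemma in_cyclotomicN a : inQN a -> inQN (- a).
Proof. by move=> Qa P PD PM PN PV Pz; apply: (PN); apply: Qa. Qed.

Lemma in_cyclotomicV a : inQN a -> inQN a^-1.
Proof. by move=> Qa P PD PM PN PV Pz; apply: (PV); apply: Qa. Qed.

Lemma in_cyclotomic_unity z : z ^+ N = 1 -> inQN z.
Proof. by move=> zN P PD PM PN PV Pz; apply: Pz. Qed.

Lemma in_cyclotomic1 : inQN 1.
Proof. by apply: in_cyclotomic_unity; rewrite expr1n. Qed.

Lemma in_cyclotomic0 : inQN 0.
Proof.
rewrite -(subrr 1); apply: in_cyclotomicD; first exact: in_cyclotomic1.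
by apply: in_cyclotomicN; apply: in_cyclotomic1.
Qed.

Lemma in_cyclotomicX a i : inQN a -> inQN (a ^+ i).
Proof.
move=> Qa; elim: i => [|i IH]; first exact: in_cyclotomic1.
by rewrite exprS; apply: in_cyclotomicM.
Qed.

Lemma in_cyclotomic_sum (I : Type) (r : seq I) (P : pred I) (f : I -> algC) :
  (forall i, P i -> inQN (f i)) -> inQN (\sum_(i <- r | P i) f i).
Proof.
by move=> Qf; apply: big_ind => //; [apply: in_cyclotomic0 | apply: in_cyclotomicD].
Qed.

Lemma in_cyclotomic_det (m : nat) (M : 'M[algC]_m) :
  (forall i j, inQN (M i j)) -> inQN (\det M).
Proof.
apply: (det_ind (P := inQN)); [exact: in_cyclotomic0 | exact: in_cyclotomic1 | |
  exact: in_cyclotomicD | exact: in_cyclotomicM].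
by apply: in_cyclotomicN; apply: in_cyclotomic1.
Qed.

(* Q(zeta_N)/Q is Galois, and its automorphisms extend to algC. *)
Lemma Crat_aut_fixed (x : algC) : (0 < N)%N -> inQN x ->
  (forall nu : {rmorphism algC -> algC}, nu x = x) -> x \in Crat.
Proof.
case: N => // N' _ Qx fix_x.
have [Qn galQn [QnC ext [w [w_prim _] _]]] := group_num_field_exists [set: 'I_N'.+1]%G.
rewrite cardsT card_ord in w_prim.
have [a aE] : exists a, QnC a = x.
  apply: (Qx (fun y => exists a, QnC a = y)).
  - by move=> _ _ [a <-] [b <-]; exists (a + b); rewrite rmorphD.
  - by move=> _ _ [a <-] [b <-]; exists (a * b); rewrite rmorphM.
  - by move=> _ [a <-]; exists (- a); rewrite rmorphN.
  - by move=> _ [a <-]; exists a^-1; rewrite fmorphV.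
  move=> z zN; have QnCw : N'.+1.-primitive_root (QnC w).
    by rewrite fmorph_primitive_root.
  have [i ->] := prim_rootP QnCw zN.
  by exists (w ^+ i); rewrite rmorphXn.
have : a \in fixedField 'Gal({:Qn} / 1)%g.
  apply/fixedFieldP; first exact: memvf.
  move=> nuQn _; have [nu nuE] := ext nuQn.
  by apply: (fmorph_inj QnC); rewrite nuE aE fix_x.
rewrite (galois_fixedField galQn) => /vlineP[r a_r].
by rewrite -aE a_r rmorphZ_num rmorph1 mulr1 Crat_rat.
Qed.

End Cyclotomic.

Lemma perm_mulmod (m t : nat) : (0 < m)%N -> coprime t m ->
  {s : 'S_m | forall i, val (s i) = (t * i %% m)%N}.
Proof.
move=> m_gt0 t_cop; pose f (i : 'I_m) := Ordinal (ltn_pmod (t * i) m_gt0).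
suff f_inj : injective f by exists (perm f_inj) => i; rewrite permE.
move=> i j /(congr1 val) /= /eqP; apply: contraTeq => /eqP i_neq_j.
wlog lt_ij : i j i_neq_j / (i < j)%N => [IH|].
  case: (ltngtP i j) => [/IH|/IH|/val_inj//]; first exact.
  by rewrite eq_sym; apply; apply/nesym.
rewrite eq_sym eqn_mod_dvd ?leq_mul2l ?(ltnW lt_ij) ?orbT // -mulnBr.
rewrite Gauss_dvdr 1?coprime_sym //; apply/negP => /(dvdn_leq _).
by have := ltn_ord j; rewrite subn_gt0 lt_ij; lia.
Qed.

Section HankelDeterminant.
Variable R : comNzRingType.

Lemma det_perm_conj (m : nat) (M : 'M[R]_m) (s : 'S_m) :
  \det (\matrix_(i, j) M (s i) (s j)) = \det M.
Proof.
have -> : \matrix_(i, j) M (s i) (s j) = row_perm s (col_perm s M).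
  by apply/matrixP => i j; rewrite !mxE.
rewrite row_permE col_permE !det_mulmx !det_perm odd_permV mulrCA mulrA.
by rewrite -mulrA -expr2 sqrr_sign mulr1.
Qed.

Lemma det_diag_conj (m : nat) (M : 'M[R]_m) (d : 'I_m -> R) :
  \det (\matrix_(i, j) (d i * d j * M i j)) = (\prod_i d i) ^+ 2 * \det M.
Proof.
pose D : 'rV_m := \row_i d i.
have -> : \matrix_(i, j) (d i * d j * M i j) = diag_mx D *m M *m diag_mx D.
  by apply/matrixP => i j; rewrite mul_mx_diag mul_diag_mx !mxE mulrAC.
rewrite !det_mulmx det_diag expr2 (eq_bigr d) => [|i _]; last by rewrite mxE.
by rewrite mulrAC.
Qed.

Definition hankel (m : nat) (f : nat -> R) : 'M[R]_m := \matrix_(i, j) f (i + j)%N.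

Lemma det_hankel_scale (m t : nat) (f : nat -> R) :
  (forall a, f (a %% m)%N = f a) -> coprime t m ->
  \det (hankel m (fun a => f (t * a)%N)) = \det (hankel m f).
Proof.
case: m f => [|m] f f_mod t_cop; first by rewrite !det_mx00.
have [s sE] := perm_mulmod (ltn0Sn m) t_cop.
rewrite -[RHS](det_perm_conj _ s); congr (\det _); apply/matrixP => i j.
by rewrite !mxE !sE -[RHS]f_mod modnDm mulnDr f_mod.
Qed.

(* Conjugation by diag(b^i), whose determinant squared is b^(m(m-1)) = 1. *)
Lemma det_hankel_twist (m : nat) (b : R) (f : nat -> R) : b ^+ m = 1 ->
  \det (hankel m (fun a => b ^+ a * f a)) = \det (hankel m f).
Proof.
move=> bm; have -> : hankel m (fun a => b ^+ a * f a) =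
    \matrix_(i, j) (b ^+ i * b ^+ j * hankel m f i j).
  by apply/matrixP => i j; rewrite !mxE exprD.
rewrite det_diag_conj expr2 {2}(reindex_inj rev_ord_inj) -big_split /=.
rewrite (eq_bigr (fun=> b ^+ m.-1)) => [|i _]; last first.
  by rewrite -exprD; congr (_ ^+ _); have := ltn_ord i; rewrite /=; lia.
by rewrite prodr_const card_ord -exprM mulnC exprM bm expr1n mul1r.
Qed.

Lemma det_exchange_mx (m : nat) :
  \det (\matrix_(i, j) ((i + j == m.-1)%N%:R) : 'M[R]_m) = (-1) ^+ 'C(m, 2).
Proof.
elim: m => [|m IH]; first by rewrite det_mx00.
rewrite (expand_det_row _ ord0) (bigD1 ord_max) //= big1 => [|j j_neq]; last first.
  by rewrite !mxE add0n (_ : (j == m :> nat) = false) ?mul0r //; apply/negbTE.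
rewrite addr0 !mxE add0n eqxx mul1r /cofactor /= add0n binS bin1 addnC exprD.
congr (_ * _); rewrite -IH; congr (\det _); apply/matrixP => i j.
rewrite !mxE lift0 lift_max /=; case: m {IH} i j => [[]//|m] i j.
by rewrite addSn eqSS.
Qed.

Lemma det_hankel_dvdn (m : nat) : (0 < m)%N ->
  \det (hankel m (fun a => if (m %| a)%N then -1 else 0)) = (-1) ^+ ('C(m, 2) + 1).
Proof.
case: m => // m _.
rewrite (expand_det_row _ ord0) (bigD1 ord0) //= big1 => [|j j_neq0]; last first.
  have j_gt0 : (0 < j)%N by rewrite lt0n.
  by rewrite !mxE add0n gtnNdvd ?mul0r.
rewrite addr0 !mxE add0n dvdn0 /cofactor /= add0n expr0 mul1r.
have -> : row' ord0 (col' ord0 (hankel m.+1 (fun a => if (m.+1 %| a)%N then -1 else 0)))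
    = - \matrix_(i, j) ((i + j == m.-1)%N%:R).
  apply/matrixP => i j; rewrite !mxE !lift0 /=.
  have -> : (m.+1 %| i.+1 + j.+1)%N = (i + j == m.-1)%N.
    have i_lt := ltn_ord i; have j_lt := ltn_ord j.
    apply/idP/idP => [/dvdnP[[|[|c]] ?]|/eqP ?]; [lia | apply/eqP; lia | nia | ].
    by apply/dvdnP; exists 1%N; lia.
  by case: (_ == _); rewrite ?oppr0.
rewrite -scaleN1r detZ det_exchange_mx -exprD binS bin1 addn1 exprS.
by rewrite addnC.
Qed.

End HankelDeterminant.

Section GaussSum.
Variables (p n : nat) (F : finFieldType) (chi : F -> algC).
Hypotheses (p_pr : prime p) (n_gt0 : (0 < n)%N) (cardF : #|F| = (p ^ n)%N).
Hypothesis chi_mchar : is_mchar chi.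
Local Notation q1 := #|F|.-1.

Definition gauss_pow (a : nat) : algC := gauss p n (mchar_pow chi a%:Z).

Lemma gauss_pow_mod a : gauss_pow (a %% q1) = gauss_pow a.
Proof. by apply: eq_bigr => x _; rewrite mchar_pow_mod. Qed.

Lemma gauss_pow_Aint a : gauss_pow a \in Aint.
Proof.
apply: rpred_sum => x _; rewrite rpredM ?mchar_pow_Aint //.
by rewrite rpredX ?zeta_Aint.
Qed.

Lemma gauss_pow_cyclotomic a : in_cyclotomic (p * q1) (gauss_pow a).
Proof.
apply: in_cyclotomic_sum => x _; apply: in_cyclotomicM.
  rewrite mchar_powE; case: eqP => [_|/eqP x_neq0]; first exact: in_cyclotomic0.
  apply: in_cyclotomicX; apply: in_cyclotomic_unity.
  by rewrite mulnC exprM mchar_unity ?expr1n.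
apply: in_cyclotomicX; apply: in_cyclotomic_unity.
by rewrite exprM zeta_expp ?expr1n.
Qed.

Section Generator.
Hypothesis chi_gen : mchar_generator chi.

Lemma gauss_pow_aut (nu : {rmorphism algC -> algC}) :
  exists t, exists2 beta, beta ^+ q1 = 1 /\ coprime t q1 &
    forall a, nu (gauss_pow a) = beta ^+ (t * a) * gauss_pow (t * a).
Proof.
have [g g_prim] := finField_prim_root F.
have chig_prim := mchar_generator_prim_root chi_gen g_prim.
have nu_mchar : is_mchar (nu \o chi).
  have [chi0 chi1 chiM] := chi_gen.1.
  by split=> [||x y] /=; rewrite ?chi0 ?chi1 ?chiM ?rmorph0 ?rmorph1 ?rmorphM.
have [|t t_cop chiE] := mchar_eq_expr chi_gen.1 nu_mchar g_prim chig_prim.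
  by rewrite /= fmorph_primitive_root.
have nu_zeta_p : nu (zeta p) ^+ p = 1 by rewrite -rmorphXn zeta_expp ?rmorph1.
have [c zetaE] := prim_rootP (zeta_prim_root p_pr) nu_zeta_p.
have pcharF := card_finPcharP cardF p_pr.
have c_neq0 : (c%:R : F) != 0.
  rewrite -(dvdn_pcharf pcharF).
  have [c0|c_gt0] := posnP c; last by rewrite gtnNdvd.
  move: zetaE; rewrite c0 expr0 -(rmorph1 nu) => /fmorph_inj zeta1.
  by have := subr_1_zeta_neq0 p_pr; rewrite zeta1 subrr eqxx.
have nu_addchar (y : F) : nu (addchar p n y) = addchar p n (c%:R * y).
  by rewrite (addchar_natrM pcharF n_gt0 cardF) /addchar rmorphXn zetaE exprAC.
pose u : F := c%:R^-1; have u_neq0 : u != 0 by rewrite invr_eq0.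
exists t, (chi u); first by split; rewrite // (mchar_unity chi_gen.1).
move=> a; rewrite /gauss_pow /gauss rmorph_sum (reindex_inj (mulfI u_neq0)) mulr_sumr.
apply: eq_bigr => x _; rewrite rmorphM mulrA -(mchar_powM chi_gen.1) //.
rewrite nu_addchar mulrA mulfV // mul1r; congr (_ * _).
rewrite !mchar_powE; case: eqP => [_|/eqP ux_neq0]; first by rewrite rmorph0.
by rewrite rmorphXn -[nu _]/((nu \o chi) _) chiE // -exprM.
Qed.

Lemma gauss_pow_generator (chi' : F -> algC) : mchar_generator chi' ->
  exists2 t, coprime t q1 & forall a, gauss p n (mchar_pow chi' a%:Z) = gauss_pow (t * a).
Proof.
move=> chi'_gen; have [g g_prim] := finField_prim_root F.
have [t t_cop chi'E] := mchar_eq_expr chi_gen.1 chi'_gen.1 g_prim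
  (mchar_generator_prim_root chi_gen g_prim) (mchar_generator_prim_root chi'_gen g_prim).
exists t => // a; apply: eq_bigr => x _; rewrite !mchar_powE.
by case: eqP => // /eqP x_neq0; rewrite chi'E // -exprM.
Qed.

(* The additive character is 1 modulo 1 - zeta_p, so the Gauss sum reduces to
   a character sum; and q - 1 = -1 modulo p. *)
Lemma gauss_pow_eqAmod a :
  (gauss_pow a == (if (q1 %| a)%N then -1 else 0) %[mod 1 - zeta p])%A.
Proof.
have [g g_prim] := finField_prim_root F.
have gauss_eqAmod : (gauss_pow a == \sum_x mchar_pow chi a%:Z x %[mod 1 - zeta p])%A.
  apply: (big_ind2 (fun u v => (u == v %[mod 1 - zeta p])%A)) => [||x _].
  - exact: eqAmod_refl.
  - by move=> *; apply: eqAmodD.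
  rewrite -[X in (_ == X %[mod _])%A]mulr1.
  by apply: eqAmodMl; rewrite ?(mchar_pow_Aint chi_gen.1) ?expr_eqAmod1 ?zeta_Aint.
apply: eqAmod_trans gauss_eqAmod _.
rewrite (sum_mchar_pow chi_gen.1 _ (mchar_generator_prim_root chi_gen g_prim)).
case: ifP => // _.
have -> : (q1%:R : algC) = (p ^ n)%:R + (-1).
  by rewrite -cardF -[in RHS](prednK (ltnW (finNzRing_gt1 F))) -addn1 natrD addrK.
rewrite -[X in (_ == X %[mod _])%A](add0r (-1)) eqAmodDr.
rewrite -(prednK n_gt0) expnS natrM -(mul0r ((p ^ n.-1)%:R)).
by apply: eqAmodMr; rewrite ?rpred_nat ?eqAmod_p_1_sub_zeta.
Qed.

End Generator.

End GaussSum.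

Section GaussHankel.
Variables (p n : nat) (F : finFieldType) (chi : F -> algC) (k : nat).
Hypotheses (p_pr : prime p) (n_gt0 : (0 < n)%N) (cardF : #|F| = (p ^ n)%N).
Hypotheses (chi_gen : mchar_generator chi) (k_dvd : (k %| (p ^ n).-1)%N).
Let chi_mchar : is_mchar chi := chi_gen.1.
Local Notation m := ((p ^ n).-1 %/ k)%N.
Local Notation f := (fun a => gauss_pow p n chi (k * a)).

Let card_unitE : #|F|.-1 = (k * m)%N.
Proof. by rewrite cardF mulnC divnK. Qed.

Let k_gt0 : (0 < k)%N.
Proof. by have := card_unit_gt0 F; rewrite card_unitE muln_gt0 => /andP[]. Qed.

Let m_gt0 : (0 < m)%N.
Proof. by have := card_unit_gt0 F; rewrite card_unitE muln_gt0 => /andP[]. Qed.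

Let f_mod a : f (a %% m)%N = f a.
Proof. by rewrite /= muln_modr -card_unitE (gauss_pow_mod _ _ chi_mchar). Qed.

Let fV_mod a : (f (a %% m)%N)^-1 = (f a)^-1.
Proof. by congr (_^-1); apply: f_mod. Qed.

Lemma Amat_hankel : Amat p n chi k = hankel m f.
Proof. by apply/matrixP => i j; rewrite !mxE mulnDr. Qed.

Lemma Bmat_hankel : Bmat p n chi k = hankel m (fun a => (f a)^-1).
Proof. by apply/matrixP => i j; rewrite !mxE mulnDr. Qed.

Lemma det_Amat_Bmat_aut (nu : {rmorphism algC -> algC}) :
  nu (\det (Amat p n chi k)) = \det (Amat p n chi k) /\
  nu (\det (Bmat p n chi k)) = \det (Bmat p n chi k).
Proof.
have [t [beta [beta_unity t_cop] nuE]] := gauss_pow_aut p_pr n_gt0 cardF chi_gen nu.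
have t_cop_m : coprime t m by apply: coprime_dvdr t_cop; rewrite card_unitE dvdn_mull.
pose b := beta ^+ (t * k).
have bm : b ^+ m = 1 by rewrite -exprM -mulnA -card_unitE mulnC exprM beta_unity expr1n.
have nu_f a : nu (f a) = b ^+ a * f (t * a)%N.
  by rewrite nuE; congr (_ * _); [rewrite mulnA exprM | rewrite mulnCA].
rewrite -!det_map_mx Amat_hankel Bmat_hankel; split.
  rewrite -(det_hankel_scale f_mod t_cop_m) -(det_hankel_twist _ bm).
  by congr (\det _); apply/matrixP => i j; rewrite !mxE nu_f.
have bVm : b^-1 ^+ m = 1 by rewrite exprVn bm invr1.
rewrite -(det_hankel_scale fV_mod t_cop_m) -(det_hankel_twist _ bVm).
by congr (\det _); apply/matrixP => i j; rewrite !mxE fmorphV nu_f invfM exprVn.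
Qed.

Lemma det_Amat_Bmat_generator (chi' : F -> algC) : mchar_generator chi' ->
  \det (Amat p n chi' k) = \det (Amat p n chi k) /\
  \det (Bmat p n chi' k) = \det (Bmat p n chi k).
Proof.
move=> chi'_gen; have [t t_cop E] := gauss_pow_generator p n chi_gen chi'_gen.
have t_cop_m : coprime t m by apply: coprime_dvdr t_cop; rewrite card_unitE dvdn_mull.
rewrite Amat_hankel Bmat_hankel -(det_hankel_scale f_mod t_cop_m).
rewrite -(det_hankel_scale fV_mod t_cop_m).
by split; congr (\det _); apply/matrixP => i j; rewrite !mxE E -mulnDr mulnCA.
Qed.

Lemma det_Amat_Bmat_Crat :
  \det (Amat p n chi k) \in Crat /\ \det (Bmat p n chi k) \in Crat.
Proof.
have N_gt0 : (0 < p * #|F|.-1)%N by rewrite muln_gt0 prime_gt0 ?card_unit_gt0.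
have f_cyc a : in_cyclotomic (p * #|F|.-1) (f a).
  exact: gauss_pow_cyclotomic p_pr chi_mchar _.
split; apply: (Crat_aut_fixed N_gt0); try by move=> nu; case: (det_Amat_Bmat_aut nu).
  by rewrite Amat_hankel; apply: in_cyclotomic_det => i j; rewrite mxE.
by rewrite Bmat_hankel; apply: in_cyclotomic_det => i j; rewrite mxE; apply: in_cyclotomicV.
Qed.

Lemma det_Amat_Cint : \det (Amat p n chi k) \is a Num.int.
Proof.
apply: Cint_rat_Aint det_Amat_Bmat_Crat.1 _; rewrite Amat_hankel.
by apply: rpred_det => i j; rewrite mxE (gauss_pow_Aint _ _ chi_mchar).
Qed.

Lemma det_Amat_congr :
  exists2 z, z \in Num.int & \det (Amat p n chi k) - (-1) ^+ ('C(m, 2) + 1) = p%:R * z.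
Proof.
apply: (eqAmod0_1_sub_zeta_dvdp p_pr).
  by rewrite rpredB ?rpredX ?rpredN1 ?det_Amat_Cint.
rewrite eqAmod0 -/(eqAmod _ _ _) -(det_hankel_dvdn _ m_gt0) Amat_hankel.
apply: det_eqAmod => i j; rewrite !mxE.
- exact: (gauss_pow_Aint _ _ chi_mchar).
- by case: ifP; rewrite ?rpredN1 ?rpred0.
by rewrite -(dvdn_pmul2l k_gt0) -card_unitE (gauss_pow_eqAmod p_pr n_gt0 cardF chi_gen).
Qed.

End GaussHankel.

Theorem theorem1p1 (p n : nat) (F : finFieldType) (chi : F -> algC) (k : nat) :
  prime p -> (0 < n)%N -> #|F| = (p ^ n)%N ->
  mchar_generator chi -> (0 < k)%N -> (k %| (p ^ n).-1)%N ->
  let m := ((p ^ n).-1 %/ k)%N in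
  [/\ \det (Amat p n chi k) \is a Num.int,
      \det (Bmat p n chi k) \in Crat,
      (forall chi' : F -> algC, mchar_generator chi' ->
         \det (Amat p n chi' k) = \det (Amat p n chi k) /\
         \det (Bmat p n chi' k) = \det (Bmat p n chi k))
    & exists z : algC, z \is a Num.int /\
        \det (Amat p n chi k) - (-1) ^+ ((m * m - m + 2) %/ 2) = p%:R * z].
Proof.
(* 0 < k follows from k %| q - 1. *)
move=> p_pr n_gt0 cardF chi_gen _ k_dvd m.
split.
- exact: det_Amat_Cint.
- by have [] := det_Amat_Bmat_Crat p_pr n_gt0 cardF chi_gen k_dvd.
- by move=> chi'; apply: det_Amat_Bmat_generator.
have -> : ((m * m - m + 2) %/ 2)%N = ('C(m, 2) + 1)%N.
  have -> : (m * m - m = m * m.-1)%N by rewrite -subn1 mulnBr muln1.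
  by rewrite bin2 -divn2; move: (m * m.-1)%N => x; lia.
by have [z] := det_Amat_congr p_pr n_gt0 cardF chi_gen k_dvd; exists z.
Qed.
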